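(* Consider the cooperative planning problem (CPP) of $M$ interconnected microgrids described in the context: $$\max \prod_{i\in\mathcal{M}} \Big[ C_i^{NonCoop} - \big( v_i + \theta\, \mathbb{E}_{\omega}C_i^{O}(\boldsymbol q_i^\omega,\boldsymbol r_i^\omega,\boldsymbol d_i^\omega,\boldsymbol x^\omega)\big)\Big]$$ subject to the supply constraint (S2), storage constraints (B1)–(B3), demand constraints (D1)–(D2), and the cooperative constraints (C1)–(C4), over the variables $\{z_i, G_i^s, G_i^w, v_i, \boldsymbol e_i^\omega, \boldsymbol q_i^\omega, \boldsymbol r_i^\omega, \boldsymbol d_i^\omega, \boldsymbol s_i^\omega, \boldsymbol x_n^\omega : i\in\mathcal M, n\in\mathcal N_i,\omega\in\Omega\}$. Then Problem CPP can be solved in two steps: Step 1: solve the joint investment and operation problem (IOP) $$\min \sum_{i\in\mathcal M} C_i^{Overall}(z_i,G_i^s,G_i^w,\boldsymbol q_i^\omega,\boldsymbol r_i^\omega,\boldsymbol d_i^\omega,\boldsymbol x^\omega)$$ subject to (S2), (B1)–(B3), (D1)–(D2), (C2) and (C3), over the variables $\{z_i, G_i^s, G_i^w, \boldsymbol e_i^\omega, \boldsymbol q_i^\omega, \boldsymbol r_i^\omega, \boldsymbol d_i^\omega, \boldsymbol s_i^\omega, \boldsymbol x_n^\omega\}$; denote by $\{z_i^\star,G_i^{s,\star},G_i^{w,\star}\}$ the optimal planning, by $\{\boldsymbol e_i^{\omega,\star},\boldsymbol q_i^{\omega,\star},\boldsymbol r_i^{\omega,\star},\boldsymbol d_i^{\omega,\star},\boldsymbol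 s_i^{\omega,\star},\boldsymbol x_n^{\omega,\star}\}$ the optimal power schedule, and by $C_i^{Oper,\star} = \theta\,\mathbb{E}_{\omega}C_i^{O}(\boldsymbol q_i^{\omega,\star},\boldsymbol r_i^{\omega,\star},\boldsymbol d_i^{\omega,\star},\boldsymbol x^{\omega,\star})$ the resulting expected operational cost of microgrid $i$ over the planning horizon. Step 2: given these optimal planning and operation decisions, solve the cost sharing problem (CSP) $$\max \prod_{i\in\mathcal M}\Big[C_i^{NonCoop} - \big(C_i^{Oper,\star} + v_i\big)\Big]$$ subject to $\sum_{i\in\mathcal M} v_i = \sum_{i\in\mathcal M} C_i^I(z_i^\star,G_i^{s,\star},G_i^{w,\star})$ and $v_i + C_i^{Oper,\star}\le C_i^{NonCoop}$ for all $i\in\mathcal M$, over the variables $\{v_i : i\in\mathcal M\}$. That is, the optimal planning/operation decisions from Step 1 together with the optimal cost shares from Step 2 constitute an optimal solution of Problem CPP.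
   Context: Setting. $\mathcal M=\{1,\dots,M\}$ is a set of interconnected microgrids; $\mathcal N_i$ is the set of users of microgrid $i$; $\mathcal T=\{1,\dots,T\}$ are the time slots of a day; $\Omega$ is a finite set of renewable generation scenarios with probabilities $\pi_\omega>0$, $\sum_{\omega\in\Omega}\pi_\omega=1$, and $\mathbb E_\omega f^\omega := \sum_{\omega\in\Omega}\pi_\omega f^\omega$. The planning horizon has $D$ days with daily discount rate $R_d$, and $\theta=\sum_{d=1}^D (1+R_d)^{-d}$. Decision variables for microgrid $i$: $z_i\in\{0,1\}$ (whether to install renewables), solar capacity $G_i^s\in[0,G_i^{s,\max}]$, wind capacity $G_i^w\in[0,G_i^{w,\max}]$; for each $\omega\in\Omega,t\in\mathcal T$: renewable supply $g_i^{\omega,t}$, grid procurement $q_i^{\omega,t}$, storage level $s_i^{\omega,t}$, charge $r_i^{\omega,t}$, discharge $d_i^{\omega,t}$, elastic load $x_n^{\omega,t}$ of each user $n\in\mathcal N_i$, power $e_{i,j}^{\omega,t}\ge 0$ supplied from microgrid $j$ to microgrid $i$; and the cost share $v_i$. Bold symbols denote the corresponding vectors over $t$ (and $j$); $\boldsymbol x^\omega$ denotes the vectors $\boldsymbol x_n^\omega$ of the users $n\in\mathcal N_i$. Parameters: fixed investment cost $F_i$, unit capacity costs $c_i^s,c_i^w$; per-unit-capacity solar and wind output $\eta_i^{s,\omega,t},\eta_i^{w,\omega,t}\ge0$; $Q_i^{\max}$; storage capacity $E_i$, depth-of-discharge $DoD_i$, $S_i^{\min}=E_i(1-DoD_i)$,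 $S_i^{\max}=E_i$, given initial level $s_i^{\omega,0}$; $r_i^{\max},d_i^{\max}>0$; efficiencies $\eta_i^r,\eta_i^d\in(0,1]$; distribution efficiencies $\eta_{i,j}$; inelastic loads $b_i^t$; user daily energy $L_n$, bounds $l_n^{t,\min},l_n^{t,\max}$, preferred consumption $y_n^t$; grid prices $p^t$; storage cost coefficient $\alpha_i$; discomfort coefficient $\beta_n$. Costs: investment cost $C_i^I(z_i,G_i^s,G_i^w)=z_i(F_i+c_i^sG_i^s+c_i^wG_i^w)$; daily operational cost in scenario $\omega$: $C_i^O(\boldsymbol q_i^\omega,\boldsymbol r_i^\omega,\boldsymbol d_i^\omega,\boldsymbol x^\omega)=\sum_{t\in\mathcal T}\big[p^tq_i^{\omega,t}+\alpha_i(r_i^{\omega,t}+d_i^{\omega,t})+\sum_{n\in\mathcal N_i}\beta_n(x_n^{\omega,t}-y_n^t)^2\big]$; overall cost $C_i^{Overall}=C_i^I(z_i,G_i^s,G_i^w)+\theta\,\mathbb E_\omega C_i^O(\boldsymbol q_i^\omega,\boldsymbol r_i^\omega,\boldsymbol d_i^\omega,\boldsymbol x^\omega)$. Constraints (for all $i\in\mathcal M$, $t\in\mathcal T$, $\omega\in\Omega$, $n\in\mathcal N_i$): (S1) $0\le g_i^{\omega,t}\le z_i(G_i^s\eta_i^{s,\omega,t}+G_i^w\eta_i^{w,\omega,t})$; (S2) $0\le q_i^{\omega,t}\le Q_i^{\max}$; (B1) $0\le r_i^{\omega,t}\le r_i^{\max}$; (B2) $0\le d_i^{\omega,t}\le d_i^{\max}$;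 (B3) $s_i^{\omega,t}=\min\{\max\{S_i^{\min}, s_i^{\omega,t-1}+\eta_i^r r_i^{\omega,t}-d_i^{\omega,t}/\eta_i^d\},S_i^{\max}\}$, with $s_i^{\omega,T}=s_i^{\omega,0}$; (D1) $\sum_{t\in\mathcal T}x_n^{\omega,t}=L_n$; (D2) $l_n^{t,\min}\le x_n^{\omega,t}\le l_n^{t,\max}$; (L) $g_i^{\omega,t}+q_i^{\omega,t}+d_i^{\omega,t}=r_i^{\omega,t}+b_i^t+\sum_{n\in\mathcal N_i}x_n^{\omega,t}$; (C1) $\sum_{i\in\mathcal M}v_i=\sum_{i\in\mathcal M}C_i^I(z_i,G_i^s,G_i^w)$; (C2) $\sum_{j\in\mathcal M}e_{j,i}^{\omega,t}\le z_i(G_i^s\eta_i^{s,\omega,t}+G_i^w\eta_i^{w,\omega,t})$; (C3) $\sum_{j\in\mathcal M}\eta_{i,j}e_{i,j}^{\omega,t}+q_i^{\omega,t}+d_i^{\omega,t}=r_i^{\omega,t}+b_i^t+\sum_{n\in\mathcal N_i}x_n^{\omega,t}$; (C4) $v_i+\theta\,\mathbb E_\omega C_i^O(\boldsymbol q_i^\omega,\boldsymbol r_i^\omega,\boldsymbol d_i^\omega,\boldsymbol x^\omega)\le C_i^{NonCoop}$. Noncooperative benchmark: $C_i^{NonCoop}$ is the optimal value of the problem of minimizing $C_i^{Overall}$ subject to (S1), (S2), (B1)–(B3), (D1), (D2), (L) over microgrid $i$'s own variables $z_i,G_i^s,G_i^w,\boldsymbol g_i^\omega,\boldsymbol q_i^\omega,\boldsymbol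 r_i^\omega,\boldsymbol d_i^\omega,\boldsymbol s_i^\omega,\boldsymbol x_n^\omega$. *)

From HB Require Import structures.
From mathcomp Require Import all_boot all_order all_algebra.
Set Implicit Arguments. Unset Strict Implicit. Unset Printing Implicit Defensive.
Import Order.TTheory GRing.Theory Num.Theory.
Local Open Scope ring_scope.

(* Conventions:
   - microgrids are 'I_M, time slots are 'I_T (slot k stands for t = k+1),
   - users form a finite type U, user n belongs to microgrid [own n]
     (so N_i = [set n | own n == i]),
   - scenarios form a finite type W with probabilities [prob]. *)

Record data (R : realFieldType) (M T : nat) (U W : finType) := Data {
  own : U -> 'I_M;
  prob : W -> R;
  nD : nat;                          (* number of days D *)
  Rd : R;                            (* daily discount rate *)
  Fc : 'I_M -> R;                    (* fixed investment cost F_i *)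
  cs : 'I_M -> R; cw : 'I_M -> R;    (* unit capacity costs *)
  Gsmax : 'I_M -> R; Gwmax : 'I_M -> R;
  etas : 'I_M -> W -> 'I_T -> R;     (* solar output per unit capacity *)
  etaw : 'I_M -> W -> 'I_T -> R;     (* wind output per unit capacity *)
  Qmax : 'I_M -> R;
  Ecap : 'I_M -> R; DoD : 'I_M -> R;
  s0 : 'I_M -> W -> R;               (* initial storage level s_i^{w,0} *)
  rmax : 'I_M -> R; dmax : 'I_M -> R;
  etar : 'I_M -> R; etad : 'I_M -> R;
  etaij : 'I_M -> 'I_M -> R;         (* distribution efficiencies eta_{i,j} *)
  bload : 'I_M -> 'I_T -> R;         (* inelastic loads b_i^t *)
  Ld : U -> R;                       (* user daily energy L_n *)
  lmin : U -> 'I_T -> R; lmax : U -> 'I_T -> R;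
  ypref : U -> 'I_T -> R;            (* preferred consumption y_n^t *)
  price : 'I_T -> R;                 (* grid price p^t *)
  alpha : 'I_M -> R;
  beta : U -> R
}.

Section Model.
Variables (R : realFieldType) (M T : nat) (U W : finType).
Variable P : data R M T U W.

Definition wf_data : Prop :=
  [/\ (forall w, 0 < prob P w), \sum_(w : W) prob P w = 1,
      (forall i w t, 0 <= etas P i w t /\ 0 <= etaw P i w t),
      (forall i, 0 < rmax P i /\ 0 < dmax P i) &
      (forall i, (0 < etar P i <= 1) /\ (0 < etad P i <= 1))].

Definition theta : R := \sum_(1 <= d < (nD P).+1) (1 + Rd P) ^- d.

Definition Smin (i : 'I_M) : R := Ecap P i * (1 - DoD P i).
Definition Smax (i : 'I_M) : R := Ecap P i.

Definition avail (z : bool) (Gs Gw : R) (i : 'I_M) (w : W) (t : 'I_T) : R :=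
  (z%:R) * (Gs * etas P i w t + Gw * etaw P i w t).

Definition CI (i : 'I_M) (z : bool) (Gs Gw : R) : R :=
  (z%:R) * (Fc P i + cs P i * Gs + cw P i * Gw).

Definition CO (i : 'I_M) (q r d : 'I_T -> R) (x : U -> 'I_T -> R) : R :=
  \sum_(t : 'I_T) (price P t * q t + alpha P i * (r t + d t)
     + \sum_(n : U | own P n == i) beta P n * (x n t - ypref P n t) ^+ 2).

Definition Oper (i : 'I_M) (q r d : W -> 'I_T -> R) (x : U -> W -> 'I_T -> R) : R :=
  theta * \sum_(w : W) prob P w * CO i (q w) (r w) (d w) (fun n => x n w).

Definition Overall (i : 'I_M) (z : bool) (Gs Gw : R)
    (q r d : W -> 'I_T -> R) (x : U -> W -> 'I_T -> R) : R :=
  CI i z Gs Gw + Oper i q r d x.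

Definition plan_ok (i : 'I_M) (Gs Gw : R) : Prop :=
  0 <= Gs <= Gsmax P i /\ 0 <= Gw <= Gwmax P i.

Definition sprev (i : 'I_M) (s : W -> 'I_T -> R) (w : W) (t : 'I_T) : R :=
  match nat_of_ord t with
  | 0 => s0 P i w
  | k.+1 => match insub k with Some t' => s w t' | None => s0 P i w end
  end.

(* (S2), (B1)-(B3), (D1)-(D2) for microgrid i and its users *)
Definition sched_ok (i : 'I_M) (q s r d : W -> 'I_T -> R)
    (x : U -> W -> 'I_T -> R) : Prop :=
  forall w : W,
  [/\ (forall t, 0 <= q w t <= Qmax P i),
      (forall t, 0 <= r w t <= rmax P i) /\
      (forall t, 0 <= d w t <= dmax P i),
      (forall t, s w t = Num.min (Num.max (Smin i)
          (sprev i s w t + etar P i * r w t - d w t / etad P i)) (Smax i)),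
      (forall t : 'I_T, (nat_of_ord t).+1 = T -> s w t = s0 P i w) /\
      (forall n, own P n = i -> \sum_(t : 'I_T) x n w t = Ld P n)
    & (forall n t, own P n = i -> lmin P n t <= x n w t <= lmax P n t)].

Definition demand (i : 'I_M) (r : W -> 'I_T -> R) (x : U -> W -> 'I_T -> R)
    (w : W) (t : 'I_T) : R :=
  r w t + bload P i t + \sum_(n : U | own P n == i) x n w t.

Definition noncoop_feasible (i : 'I_M) (z : bool) (Gs Gw : R)
    (g q s r d : W -> 'I_T -> R) (x : U -> W -> 'I_T -> R) : Prop :=
  [/\ plan_ok i Gs Gw,
      (forall w t, 0 <= g w t <= avail z Gs Gw i w t),
      sched_ok i q s r d x &
      (forall w t, g w t + q w t + d w t = demand i r x w t)].

Definition is_noncoop_value (i : 'I_M) (NC : R) : Prop :=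
  (exists z Gs Gw g q s r d x,
      noncoop_feasible i z Gs Gw g q s r d x /\ Overall i z Gs Gw q r d x = NC) /\
  (forall z Gs Gw g q s r d x,
      noncoop_feasible i z Gs Gw g q s r d x -> NC <= Overall i z Gs Gw q r d x).

Record plan := Plan { pz : 'I_M -> bool; pGs : 'I_M -> R; pGw : 'I_M -> R }.
Record sched := Sched {
  se : 'I_M -> 'I_M -> W -> 'I_T -> R;   (* e_{i,j}^{w,t}: from j to i *)
  sq : 'I_M -> W -> 'I_T -> R;
  ss : 'I_M -> W -> 'I_T -> R;
  sr : 'I_M -> W -> 'I_T -> R;
  sd : 'I_M -> W -> 'I_T -> R;
  sx : U -> W -> 'I_T -> R }.

Definition OperS (S : sched) (i : 'I_M) : R := Oper i (sq S i) (sr S i) (sd S i) (sx S).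
Definition CIp (pl : plan) (i : 'I_M) : R := CI i (pz pl i) (pGs pl i) (pGw pl i).

(* common constraints of IOP and CPP: planning bounds, (S2),(B1)-(B3),(D1)-(D2),
   e >= 0, (C2), (C3) *)
Definition joint_ok (pl : plan) (S : sched) : Prop :=
  [/\ (forall i, plan_ok i (pGs pl i) (pGw pl i)) /\
      (forall i, sched_ok i (sq S i) (ss S i) (sr S i) (sd S i) (sx S)),
      (forall i j w t, 0 <= se S i j w t),
      (forall i w t, \sum_(j : 'I_M) se S j i w t
                       <= avail (pz pl i) (pGs pl i) (pGw pl i) i w t)
    & (forall i w t, \sum_(j : 'I_M) etaij P i j * se S i j w t
                       + sq S i w t + sd S i w t = demand i (sr S i) (sx S) w t)].

Definition iop_obj (pl : plan) (S : sched) : R :=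
  \sum_(i : 'I_M) (CIp pl i + OperS S i).

Definition iop_optimal (pl : plan) (S : sched) : Prop :=
  joint_ok pl S /\
  (forall pl' S', joint_ok pl' S' -> iop_obj pl S <= iop_obj pl' S').

Definition cpp_feasible (NC : 'I_M -> R) (pl : plan) (S : sched) (v : 'I_M -> R) : Prop :=
  [/\ joint_ok pl S,
      \sum_(i : 'I_M) v i = \sum_(i : 'I_M) CIp pl i
    & (forall i, v i + OperS S i <= NC i)].

Definition cpp_obj (NC : 'I_M -> R) (S : sched) (v : 'I_M -> R) : R :=
  \prod_(i : 'I_M) (NC i - (v i + OperS S i)).

Definition cpp_optimal (NC : 'I_M -> R) (pl : plan) (S : sched) (v : 'I_M -> R) : Prop :=
  cpp_feasible NC pl S v /\
  (forall pl' S' v', cpp_feasible NC pl' S' v' -> cpp_obj NC S' v' <= cpp_obj NC S v).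

Definition csp_feasible (NC : 'I_M -> R) (pl : plan) (S : sched) (v : 'I_M -> R) : Prop :=
  \sum_(i : 'I_M) v i = \sum_(i : 'I_M) CIp pl i /\
  (forall i, v i + OperS S i <= NC i).

Definition csp_obj (NC : 'I_M -> R) (S : sched) (v : 'I_M -> R) : R :=
  \prod_(i : 'I_M) (NC i - (OperS S i + v i)).

Definition csp_optimal (NC : 'I_M -> R) (pl : plan) (S : sched) (v : 'I_M -> R) : Prop :=
  csp_feasible NC pl S v /\
  (forall v', csp_feasible NC pl S v' -> csp_obj NC S v' <= csp_obj NC S v).

End Model.

(* Total cost is conserved under any redistribution of investment costs, so an
   IOP-optimal plan leaves, relative to any other feasible plan, a nonnegative
   surplus [iop_obj pl' S' - iop_obj pl S].  Given a CPP-feasible point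
   (pl', S', v'), keep each microgrid's total cost [v'_i + Oper'_i] but pay for
   it with the operation of (pl, S), and return the surplus in equal shares.
   The resulting cost shares are CSP-feasible for (pl, S) and make every factor
   of the Nash product at least as large, so CSP optimality of v bounds the
   CPP objective of every feasible point. *)
From mathcomp Require Import all_boot all_order all_algebra.
From mathcomp Require Import lra.
Set Implicit Arguments. Unset Strict Implicit. Unset Printing Implicit Defensive.
Import Order.TTheory GRing.Theory Num.Theory.
Local Open Scope ring_scope.

Lemma sumr_sub_avg_diff (R : numFieldType) (I : finType) (a b : I -> R) :
  \sum_i (a i - (\sum_j (a j - b j)) / #|I|%:R) = \sum_i b i.
Proof.
have [/card0_eq I0 | I_gt0] := posnP #|I|.
  by rewrite !big_pred0.
by rewrite sumrB sumr_const -[X in _ - X]mulr_natr divfK ?pnatr_eq0 -?lt0n //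
  sumrB opprB addrC subrK.
Qed.

Section CostSharing.
Variables (R : realFieldType) (M T : nat) (U W : finType).
Variables (P : data R M T U W) (NC : 'I_M -> R).

Lemma cpp_obj_csp_obj (S : sched R M T U W) (v : 'I_M -> R) :
  cpp_obj P NC S v = csp_obj P NC S v.
Proof. by apply: eq_bigr => i _; rewrite [v i + _]addrC. Qed.

Lemma cpp_feasibleE (pl : plan R M) (S : sched R M T U W) (v : 'I_M -> R) :
  cpp_feasible P NC pl S v <-> joint_ok P pl S /\ csp_feasible P NC pl S v.
Proof. by split=> [[? ? ?] | [? [? ?]]]. Qed.

Definition rebalance (pl : plan R M) (S S' : sched R M T U W) (v' : 'I_M -> R)
    (i : 'I_M) : R :=
  let a j := v' j + OperS P S' j - OperS P S j in
  a i - (\sum_j (a j - CIp P pl j)) / #|'I_M|%:R.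

Lemma rebalance_surplus (pl pl' : plan R M) (S S' : sched R M T U W)
    (v' : 'I_M -> R) :
  \sum_i v' i = \sum_i CIp P pl' i ->
  \sum_j (v' j + OperS P S' j - OperS P S j - CIp P pl j)
    = iop_obj P pl' S' - iop_obj P pl S.
Proof. by move=> C1'; rewrite /iop_obj !sumrB !big_split /= C1'; lra. Qed.

Lemma rebalance_csp_feasible (pl pl' : plan R M) (S S' : sched R M T U W)
    (v' : 'I_M -> R) :
  iop_optimal P pl S -> cpp_feasible P NC pl' S' v' ->
  csp_feasible P NC pl S (rebalance pl S S' v') /\
  cpp_obj P NC S' v' <= csp_obj P NC S (rebalance pl S S' v').
Proof.
move=> [_ iop_min] [joint_ok' C1' C4'].
have share_ge0 : 0 <= (\sum_j (v' j + OperS P S' j - OperS P S j - CIp P pl j))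
                        / #|'I_M|%:R.
  by rewrite divr_ge0 // (rebalance_surplus pl S S' C1') subr_ge0; exact: iop_min.
have factor_le i : NC i - (v' i + OperS P S' i)
                   <= NC i - (OperS P S i + rebalance pl S S' v' i).
  by rewrite /rebalance /=; lra.
split; first split.
- exact: sumr_sub_avg_diff.
- by move=> i; have := factor_le i; have := C4' i; lra.
apply: ler_prod => i _; rewrite factor_le andbT.
by have := C4' i; lra.
Qed.

End CostSharing.

Theorem theorem1 (R : realFieldType) (M T : nat) (U W : finType)
    (P : data R M T U W) (NC : 'I_M -> R) :
  wf_data P ->
  (forall i : 'I_M, is_noncoop_value P i (NC i)) ->
  forall (pl : plan R M) (S : sched R M T U W),
    iop_optimal P pl S ->
  forall v : 'I_M -> R,
    csp_optimal P NC pl S v ->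
    cpp_optimal P NC pl S v.
Proof.
move=> _ _ pl S iop_opt v [csp_feas csp_max].
split; first by apply/cpp_feasibleE; split; [case: iop_opt | ].
move=> pl' S' v' cpp_feas'.
have [feas2 le2] := rebalance_csp_feasible iop_opt cpp_feas'.
by rewrite (cpp_obj_csp_obj _ _ S v); apply: le_trans le2 (csp_max _ feas2).
Qed.
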